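(* Let $A$ be Hurwitz and let $M_{\rm initial},\sigma_{\rm slowest}>0$ satisfy $\|e^{At}\|_2\le M_{\rm initial}e^{-\sigma_{\rm slowest}t}$ for all $t\ge0$. Let $\widetilde M_{\rm loose}=2M_{\rm initial}\|B\|_2/\sigma_{\rm slowest}$ and $\mathcal{B}_{\rm ultimate}=\{x\in\mathbb{R}^n:\|x\|_2\le\widetilde M_{\rm loose}\}$. Let $x(\cdot)$ be a trajectory of the relay feedback system $\dot x=Ax-B\,\mathrm{sign}(Cx)$ with $x(0)\in\mathcal{B}_{\rm ultimate}$. Then for all times $t$ greater than $t_{\rm excursions\text{-}over}=\frac{1}{\sigma_{\rm slowest}}\log(2M_{\rm initial})$, $x(t)\in\mathcal{B}_{\rm ultimate}$ (although at earlier times the state may leave $\mathcal{B}_{\rm ultimate}$).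
   Context: $A$ is the $n\times n$ observer canonical matrix ($A_{i+1,i}=1$ for $i=1,\dots,n-1$, last column $(-a_0,\dots,-a_{n-1})^T$, other entries zero), $B=(b_0,\dots,b_{n-1})^T$, $C=(0,\dots,0,1)$. $\mathrm{sign}(e)=1$ for $e>0$, $-1$ for $e<0$, and $[-1,1]$ for $e=0$; trajectories are (Filippov) solutions, and on the switching set one uses non-sliding solutions. *)

From HB Require Import structures.
From mathcomp Require Import all_boot all_order all_algebra.
From mathcomp Require Import all_classical all_reals all_analysis.
From mathcomp Require complex.
Import complex.ComplexField.

Set Implicit Arguments.
Unset Strict Implicit.
Unset Printing Implicit Defensive.

Import Order.TTheory GRing.Theory Num.Theory.
Import numFieldNormedType.Exports.
Local Open Scope classical_set_scope.
Local Open Scope ring_scope.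

Section RelayDefs.
Variable R : realType.

Definition obsA (n : nat) (a : 'I_n -> R) : 'M[R]_n :=
  \matrix_(i < n, j < n)
    if (i == j.+1 :> nat) then 1
    else if (j == n.-1 :> nat) then - a i else 0.

Definition obsB (n : nat) (b : 'I_n -> R) : 'cV[R]_n := \col_(i < n) b i.

Definition obsC (n : nat) : 'rV[R]_n :=
  \row_(j < n) (if (j == n.-1 :> nat) then 1 else 0).

Definition vnorm2 (n : nat) (x : 'cV[R]_n) : R :=
  Num.sqrt (\sum_(i < n) x i ord0 ^+ 2).

Definition opnorm2 (n : nat) (M : 'M[R]_n) : R :=
  sup [set vnorm2 (M *m x) | x in [set x : 'cV[R]_n | vnorm2 x <= 1]].

Definition expmt (n : nat) (A : 'M[R]_n) (t : R) : 'M[R]_n :=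
  \matrix_(i < n, j < n)
    limn (fun N : nat => \sum_(0 <= k < N) (t ^+ k / (k`!)%:R * (A ^+ k) i j)).

Definition hurwitz (n : nat) (A : 'M[R]_n) : Prop :=
  forall z : complex.complex R,
    eigenvalue (map_mx (fun r : R => complex.Complex r 0) A) z ->
    complex.Re z < 0.

Definition sign_set (e : R) : set R :=
  if 0 < e then [set 1] else if e < 0 then [set -1] else `[-1, 1]%classic.

(* Filippov solution on [0,+oo) of xdot = A x - B sign(C x), in integral form:
   x is continuous and there is a measurable selection u(s) in sign(C x(s))
   with x(t) = x(0) + int_0^t (A x(s) - B u(s)) ds for all t >= 0. *)
Definition filippov_solution (n : nat) (A : 'M[R]_n) (B : 'cV[R]_n)
    (C : 'rV[R]_n) (x : R -> 'cV[R]_n) : Prop :=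
  (forall i, {within [set t : R | 0 <= t], continuous (fun t : R => x t i ord0)}) /\
  exists u : R -> R,
    measurable_fun (`[0, +oo[%classic : set R) u /\
    (forall s, 0 <= s -> sign_set ((C *m x s) ord0 ord0) (u s)) /\
    (forall t, 0 <= t -> forall i,
       x t i ord0 = x 0 i ord0 +
         Rintegral lebesgue_measure `[0, t]%classic
           (fun s => (A *m x s - u s *: B) i ord0)).

Definition non_sliding (n : nat) (C : 'rV[R]_n) (x : R -> 'cV[R]_n) : Prop :=
  ~ exists t1 t2, 0 <= t1 /\ t1 < t2 /\
      (forall s, t1 <= s <= t2 -> (C *m x s) ord0 ord0 = 0).

End RelayDefs.

From HB Require Import structures.
From mathcomp Require Import all_boot all_order all_algebra.
From mathcomp Require Import all_classical all_reals all_analysis.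
From mathcomp Require Import ring lra.
From mathcomp Require Import measurable_realfun.

Set Implicit Arguments.
Unset Strict Implicit.
Unset Printing Implicit Defensive.

Import Order.TTheory GRing.Theory Num.Theory.
Import numFieldNormedType.Exports.
Local Open Scope classical_set_scope.
Local Open Scope ring_scope.

(* Discretized variation of constants.  For h = t/N and s_k = k h, the vectors
   phi_k = e^{A(t - s_k)} x(s_k) telescope from phi_0 = e^{At} x(0) to phi_N = x(t).
   Expanding e^{A(tau + h)} = e^{A tau}(1 + hA) + O(h^2) entrywise and using the
   integral equation of x on ]s_k, s_k + h], one gets
     phi_{k+1} - phi_k = - (int_{s_k}^{s_{k+1}} u) e^{A(t - s_{k+1})} B + O(h^2),
   and |u| <= 1.  Summing the geometric bounds M e^{-sigma (t - s_{k+1})} yields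
     |x(t)| <= M e^{-sigma t} |x(0)| + M |B| e^{sigma h} / sigma + O(1/N),
   so letting N -> oo gives |x(t)| <= M e^{-sigma t} |x(0)| + M |B| / sigma.  For
   t > ln(2M)/sigma the first term is at most half of the radius 2M|B|/sigma and
   the second term is exactly the other half. *)

Lemma sum_sqr_le_sqr_sum (R : realDomainType) (I : Type) (r : seq I) (F : I -> R) :
  (forall i, 0 <= F i) -> \sum_(i <- r) F i ^+ 2 <= (\sum_(i <- r) F i) ^+ 2.
Proof.
move=> F0; elim: r => [|i r IH]; first by rewrite !big_nil expr0n.
rewrite !big_cons.
have S0 : 0 <= \sum_(j <- r) F j by apply: sumr_ge0 => j _.
have := F0 i; nra.
Qed.

Lemma ler_sum_ord_const (R : numDomainType) (n : nat) (F : 'I_n -> R) (c : R) :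
  (forall i, F i <= c) -> \sum_(i < n) F i <= n%:R * c.
Proof.
move=> Fc; apply: le_trans (_ : \sum_(i < n) c <= _); first exact: ler_sum.
by rewrite sumr_const card_ord mulr_natl.
Qed.

Section EuclideanNorm.
Variable R : realType.
Implicit Types (n : nat).

Lemma vnorm2_ge0 n (v : 'cV[R]_n) : 0 <= vnorm2 v.
Proof. exact: sqrtr_ge0. Qed.

Lemma vnorm2_sqr n (v : 'cV[R]_n) : vnorm2 v ^+ 2 = \sum_(i < n) v i ord0 ^+ 2.
Proof. by rewrite sqr_sqrtr // sumr_ge0 // => i _; exact: sqr_ge0. Qed.

Lemma vnorm2_le_of_sqr n (v : 'cV[R]_n) c :
  0 <= c -> \sum_(i < n) v i ord0 ^+ 2 <= c ^+ 2 -> vnorm2 v <= c.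
Proof.
move=> c0 vc; rewrite -(ger0_norm c0) -sqrtr_sqr ler_sqrt //.
exact: sqr_ge0.
Qed.

Lemma normr_entry_le_vnorm2 n (v : 'cV[R]_n) i : `|v i ord0| <= vnorm2 v.
Proof.
rewrite -sqrtr_sqr ler_sqrt; last by rewrite sumr_ge0 // => j _; exact: sqr_ge0.
by rewrite (bigD1 i) //= lerDl sumr_ge0 // => j _; exact: sqr_ge0.
Qed.

Lemma vnorm2_le_sum_normr n (v : 'cV[R]_n) : vnorm2 v <= \sum_(i < n) `|v i ord0|.
Proof.
apply: vnorm2_le_of_sqr; first exact: sumr_ge0.
apply: le_trans (sum_sqr_le_sqr_sum _ (fun i => normr_ge0 (v i ord0))).
by apply: ler_sum => i _; rewrite real_normK ?num_real.
Qed.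

Lemma vnorm2Z n (v : 'cV[R]_n) c : vnorm2 (c *: v) = `|c| * vnorm2 v.
Proof.
rewrite /vnorm2 -sqrtr_sqr -sqrtrM ?sqr_ge0 // mulr_sumr.
by congr Num.sqrt; apply: eq_bigr => i _; rewrite mxE exprMn.
Qed.

Lemma vnorm20 n : vnorm2 (0 : 'cV[R]_n) = 0.
Proof. by rewrite -(scale0r (0 : 'cV[R]_n)) vnorm2Z normr0 mul0r. Qed.

Lemma vnorm2N n (v : 'cV[R]_n) : vnorm2 (- v) = vnorm2 v.
Proof. by rewrite -scaleN1r vnorm2Z normrN1 mul1r. Qed.

Lemma vnorm2_eq0 n (v : 'cV[R]_n) : vnorm2 v = 0 -> v = 0.
Proof.
move=> v0; apply/matrixP => i j; rewrite (ord1 j) mxE; apply/eqP.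
by rewrite -normr_le0 -v0 normr_entry_le_vnorm2.
Qed.

Lemma vnorm2_cauchy_schwarz n (u v : 'cV[R]_n) :
  \sum_(i < n) u i ord0 * v i ord0 <= vnorm2 u * vnorm2 v.
Proof.
have [/vnorm2_eq0 ->|u0] := eqVneq (vnorm2 u) 0.
  by rewrite vnorm20 mul0r big1 // => i _; rewrite mxE mul0r.
have [/vnorm2_eq0 ->|v0] := eqVneq (vnorm2 v) 0.
  by rewrite vnorm20 mulr0 big1 // => i _; rewrite mxE mulr0.
set a := vnorm2 u; set b := vnorm2 v.
have ab0 : 0 < a * b by rewrite mulr_gt0 // lt0r ?u0 ?v0 vnorm2_ge0.
have key : \sum_(i < n) 2 * (a * b) * (u i ord0 * v i ord0)
    <= \sum_(i < n) (b ^+ 2 * u i ord0 ^+ 2 + a ^+ 2 * v i ord0 ^+ 2).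
  apply: ler_sum => i _; have := sqr_ge0 (b * u i ord0 - a * v i ord0); nra.
rewrite -mulr_sumr big_split /= -!mulr_sumr -!vnorm2_sqr -/a -/b in key.
rewrite -(ler_pM2l (_ : 0 < 2 * (a * b))); last by rewrite mulr_gt0.
apply: le_trans key _; nra.
Qed.

Lemma ler_vnorm2D n (u v : 'cV[R]_n) : vnorm2 (u + v) <= vnorm2 u + vnorm2 v.
Proof.
apply: vnorm2_le_of_sqr; first by rewrite addr_ge0 ?vnorm2_ge0.
have -> : \sum_(i < n) (u + v) i ord0 ^+ 2 = \sum_(i < n) u i ord0 ^+ 2
    + \sum_(i < n) v i ord0 ^+ 2 + 2 * \sum_(i < n) u i ord0 * v i ord0.
  by rewrite mulr_sumr -!big_split /=; apply: eq_bigr => i _; rewrite mxE; ring.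
have := vnorm2_cauchy_schwarz u v; rewrite -!vnorm2_sqr; nra.
Qed.

Lemma ler_vnorm2_sum n (I : Type) (r : seq I) (F : I -> 'cV[R]_n) :
  vnorm2 (\sum_(i <- r) F i) <= \sum_(i <- r) vnorm2 (F i).
Proof.
elim: r => [|i r IH]; first by rewrite !big_nil vnorm20.
by rewrite !big_cons; apply: le_trans (ler_vnorm2D _ _) _; exact: lerD.
Qed.

Definition mx_l1norm n (Q : 'M[R]_n) : R := \sum_(i < n) \sum_(j < n) `|Q i j|.

Lemma mx_l1norm_ge0 n (Q : 'M[R]_n) : 0 <= mx_l1norm Q.
Proof. by apply: sumr_ge0 => i _; exact: sumr_ge0. Qed.

Lemma sum_normr_row_le_mx_l1norm n (Q : 'M[R]_n) i :
  \sum_(j < n) `|Q i j| <= mx_l1norm Q.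
Proof.
rewrite [leRHS](bigD1 i) //= lerDl.
by apply: sumr_ge0 => k _; exact: sumr_ge0.
Qed.

Lemma normr_entry_le_mx_l1norm n (Q : 'M[R]_n) i j : `|Q i j| <= mx_l1norm Q.
Proof.
apply: le_trans (sum_normr_row_le_mx_l1norm Q i).
by rewrite [leRHS](bigD1 j) //= lerDl sumr_ge0.
Qed.

Lemma ler_vnorm2_mulmx n (Q : 'M[R]_n) (v : 'cV[R]_n) :
  vnorm2 (Q *m v) <= mx_l1norm Q * vnorm2 v.
Proof.
apply: le_trans (vnorm2_le_sum_normr _) _.
rewrite mulr_suml; apply: ler_sum => i _; rewrite mxE mulr_suml.
apply: le_trans (ler_norm_sum _ _ _) _; apply: ler_sum => j _.
by rewrite normrM ler_wpM2l // normr_entry_le_vnorm2.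
Qed.

Lemma ler_vnorm2_mulmx_opnorm2 n (Q : 'M[R]_n) (v : 'cV[R]_n) :
  vnorm2 (Q *m v) <= opnorm2 Q * vnorm2 v.
Proof.
have [/vnorm2_eq0 ->|v0] := eqVneq (vnorm2 v) 0.
  by rewrite mulmx0 vnorm20 mulr0.
have vp : 0 < vnorm2 v by rewrite lt0r v0 vnorm2_ge0.
have ubQ : has_ubound
    [set vnorm2 (Q *m y) | y in [set y : 'cV[R]_n | vnorm2 y <= 1]].
  exists (mx_l1norm Q) => _ [y /= y1 <-].
  apply: le_trans (ler_vnorm2_mulmx _ _) _.
  by rewrite -[leRHS]mulr1 ler_wpM2l ?mx_l1norm_ge0.
have hv : vnorm2 (Q *m ((vnorm2 v)^-1 *: v)) <= opnorm2 Q.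
  apply: (ub_le_sup ubQ); exists ((vnorm2 v)^-1 *: v) => //=.
  by rewrite vnorm2Z ger0_norm ?invr_ge0 ?vnorm2_ge0 // mulVf.
rewrite -scalemxAr vnorm2Z ger0_norm ?invr_ge0 ?vnorm2_ge0 // in hv.
by rewrite -ler_pdivrMr // mulrC.
Qed.

Lemma opnorm2_1_ge1 n : (0 < n)%N -> 1 <= opnorm2 (1 : 'M[R]_n).
Proof.
move=> n0; pose v : 'cV[R]_n := const_mx 1.
have v1 : 1 <= vnorm2 v.
  by have := normr_entry_le_vnorm2 v (Ordinal n0); rewrite mxE normr1.
have vp : 0 < vnorm2 v := lt_le_trans ltr01 v1.
by have := ler_vnorm2_mulmx_opnorm2 1 v; rewrite mul1mx -ler_pdivrMr // divff ?gt_eqF.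
Qed.

End EuclideanNorm.

Section SeriesFacts.
Variable R : realType.

Lemma series_le_exp_coeff (a : R^nat) (C z : R) : 0 <= C -> 0 <= z ->
  (forall k, `|a k| <= C * exp_coeff z k) ->
  cvgn (series a) /\ `|limn (series a)| <= C * expR z.
Proof.
move=> C0 z0 aC.
have cvgC : cvgn (series (C *: exp_coeff z)).
  exact/is_cvg_seriesZ/is_cvg_series_exp_coeff.
have cvg_norm : cvgn (series (fun k => `|a k|)).
  apply: (series_le_cvg _ _ _ cvgC) => k //=.
  by rewrite mulr_ge0 // exp_coeff_ge0.
split; first exact: normed_cvg.
apply: le_trans (lim_series_norm cvg_norm) _.
have -> : C * expR z = limn (series (C *: exp_coeff z)).
  by rewrite lim_seriesZ //; exact: is_cvg_series_exp_coeff.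
exact: lim_series_le.
Qed.

Lemma limn_shiftS (u : R^nat) : limn (fun N => u N.+1) = limn u.
Proof. by rewrite /lim /lim_in; congr get; apply/funext => l; exact: cvg_shiftS. Qed.

Lemma cvgn_shiftS (u : R^nat) : cvgn (fun N => u N.+1) = cvgn u.
Proof. by rewrite limn_shiftS; exact: cvg_shiftS. Qed.

Lemma series_shiftS (g : R^nat) :
  g 0%N = 0 -> series (fun k => g k.+1) = (fun N => series g N.+1).
Proof.
by move=> g0; apply/funext => N; rewrite /series /= big_nat_recl //= g0 add0r.
Qed.

Lemma series_sum_nil (I : Type) (F : I -> R^nat) :
  series (fun k => \sum_(l <- [::]) F l k) = cst 0.
Proof. by apply/funext => N; rewrite /series /= big1 // => k _; rewrite big_nil. Qed.

Lemma series_sum_cons (I : Type) (l : I) (r : seq I) (F : I -> R^nat) :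
  series (fun k => \sum_(l' <- l :: r) F l' k)
  = series (F l) + series (fun k => \sum_(l' <- r) F l' k).
Proof. by rewrite -seriesD; congr series; apply/funext => k; rewrite big_cons. Qed.

Lemma is_cvg_series_sum (I : Type) (r : seq I) (F : I -> R^nat) :
  (forall l, cvgn (series (F l))) -> cvgn (series (fun k => \sum_(l <- r) F l k)).
Proof.
move=> cvgF; elim: r => [|l r IH]; first by rewrite series_sum_nil; exact: is_cvg_cst.
by rewrite series_sum_cons; exact: is_cvgD.
Qed.

Lemma lim_series_sum (I : Type) (r : seq I) (F : I -> R^nat) :
  (forall l, cvgn (series (F l))) ->
  limn (series (fun k => \sum_(l <- r) F l k)) = \sum_(l <- r) limn (series (F l)).
Proof.
move=> cvgF; elim: r => [|l r IH]; first by rewrite series_sum_nil big_nil lim_cst.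
rewrite series_sum_cons limD; [by rewrite IH big_cons | exact: cvgF |].
exact: is_cvg_series_sum.
Qed.

End SeriesFacts.

Section PowTaylor.
Variable R : realDomainType.
Implicit Types tau h Y : R.

(* [k.-1] truncates at [k = 0], where the factor [k] kills the last term anyway. *)
Definition pow_taylor2_rem tau h (k : nat) : R :=
  (tau + h) ^+ k - tau ^+ k - k%:R * h * tau ^+ k.-1.

Lemma pow_taylor2_remS tau h k : pow_taylor2_rem tau h k.+1 =
  (tau + h) * pow_taylor2_rem tau h k + k%:R * h ^+ 2 * tau ^+ k.-1.
Proof. by rewrite /pow_taylor2_rem -natr1; case: k => [|k] /=; rewrite !exprS; ring. Qed.

Lemma pow_taylor2_rem_ge0 tau h k : 0 <= tau -> 0 <= h -> 0 <= pow_taylor2_rem tau h k.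
Proof.
move=> tau0 h0; elim: k => [|k IH].
  by rewrite /pow_taylor2_rem !expr0 !mul0r subr0 subrr.
rewrite pow_taylor2_remS; apply: addr_ge0; first by apply: mulr_ge0 => //; lra.
by apply: mulr_ge0; [apply: mulr_ge0; [|exact: sqr_ge0] | exact: exprn_ge0].
Qed.

Lemma pow_taylor2_rem_le tau h Y k : 0 <= tau -> 0 <= h -> tau + h <= Y ->
  Y ^+ 2 * pow_taylor2_rem tau h k <= k%:R ^+ 2 * h ^+ 2 * Y ^+ k.
Proof.
move=> tau0 h0 tauY; have Y0 : 0 <= Y by lra.
elim: k => [|k IH].
  by rewrite /pow_taylor2_rem !expr0 !mul0r subr0 subrr !mulr0 expr0n !mul0r.
have rem0 := pow_taylor2_rem_ge0 k tau0 h0.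
have head : (tau + h) * (Y ^+ 2 * pow_taylor2_rem tau h k)
    <= k%:R ^+ 2 * h ^+ 2 * Y ^+ k.+1.
  have -> : k%:R ^+ 2 * h ^+ 2 * Y ^+ k.+1 = Y * (k%:R ^+ 2 * h ^+ 2 * Y ^+ k).
    by rewrite [Y ^+ k.+1]exprS; ring.
  apply: ler_pM => //; [lra | by rewrite mulr_ge0 ?sqr_ge0].
have tail : Y ^+ 2 * (k%:R * h ^+ 2 * tau ^+ k.-1) <= k%:R * h ^+ 2 * Y ^+ k.+1.
  case: k {IH rem0 head} => [|k]; first by rewrite !mul0r mulr0.
  have tauY_k : tau ^+ k <= Y ^+ k by rewrite lerXn2r ?nnegrE //; lra.
  have -> : k.+1%:R * h ^+ 2 * Y ^+ k.+2 = k.+1%:R * h ^+ 2 * Y ^+ 2 * Y ^+ k.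
    by rewrite [Y ^+ k.+2]exprS [Y ^+ k.+1]exprS; ring.
  rewrite /= mulrCA mulrA ler_wpM2l // mulr_ge0 // mulr_ge0 ?sqr_ge0 //.
rewrite pow_taylor2_remS mulrDr mulrCA.
apply: le_trans (lerD head tail) _.
have hY0 : 0 <= h ^+ 2 * Y ^+ k.+1 by rewrite mulr_ge0 ?sqr_ge0 ?exprn_ge0.
have -> : k%:R ^+ 2 * h ^+ 2 * Y ^+ k.+1 + k%:R * h ^+ 2 * Y ^+ k.+1
    = (k%:R ^+ 2 + k%:R) * (h ^+ 2 * Y ^+ k.+1) by ring.
rewrite -mulrA ler_wpM2r // -natr1.
have : 0 <= k%:R :> R by []; nra.
Qed.

Lemma pow_taylor2_rem_le_exp4 tau h Y k : 0 <= tau -> 0 <= h -> tau + h <= Y ->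
  Y ^+ 2 * pow_taylor2_rem tau h k <= h ^+ 2 * (4 * Y) ^+ k.
Proof.
move=> tau0 h0 tauY; apply: le_trans (pow_taylor2_rem_le k tau0 h0 tauY) _.
have k4 : k%:R ^+ 2 <= 4 ^+ k :> R.
  have k2 : (k * k <= 2 ^ k * 2 ^ k)%N by rewrite leq_mul // ltnW // ltn_expl.
  rewrite -natrX -(natrX R 4) ler_nat -mulnn; apply: leq_trans k2 _.
  by rewrite -expnMn.
have Yk0 : 0 <= Y ^+ k by rewrite exprn_ge0 //; lra.
have -> : h ^+ 2 * (4 * Y) ^+ k = 4 ^+ k * h ^+ 2 * Y ^+ k by rewrite exprMn; ring.
by rewrite ler_wpM2r // ler_wpM2r ?sqr_ge0.
Qed.

End PowTaylor.

Section MatrixExponential.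
Variables (R : realType) (n : nat) (A : 'M[R]_n).

Definition expmt_term (tau : R) (i j : 'I_n) : R^nat :=
  fun k => tau ^+ k / k`!%:R * (A ^+ k) i j.

Lemma expmtE tau i j : expmt A tau i j = limn (series (expmt_term tau i j)).
Proof. by rewrite mxE. Qed.

Lemma normr_powmx_le k i j : `|(A ^+ k) i j| <= (n%:R * mx_l1norm A) ^+ k.
Proof.
elim: k i j => [|k IH] i j.
  by rewrite expr0 -idmxE mxE; case: (i == j); rewrite ?normr1 ?normr0.
rewrite exprSr -mulmxE mxE; apply: le_trans (ler_norm_sum _ _ _) _.
have -> : (n%:R * mx_l1norm A) ^+ k.+1
    = n%:R * ((n%:R * mx_l1norm A) ^+ k * mx_l1norm A) by rewrite exprSr; ring.
apply: ler_sum_ord_const => l; rewrite normrM.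
by apply: ler_pM => //; exact: normr_entry_le_mx_l1norm.
Qed.

Lemma normr_expmt_term_le tau i j k :
  `|expmt_term tau i j k| <= exp_coeff (`|tau| * (n%:R * mx_l1norm A)) k.
Proof.
rewrite /expmt_term /exp_coeff /= !normrM exprMn normrX.
rewrite [`|_^-1|]ger0_norm ?invr_ge0 // mulrAC ler_wpM2r ?invr_ge0 //.
by rewrite ler_wpM2l ?exprn_ge0 ?normr_powmx_le.
Qed.

Lemma is_cvg_expmt_series tau i j : cvgn (series (expmt_term tau i j)).
Proof.
apply: (proj1 (@series_le_exp_coeff _ _ 1 (`|tau| * (n%:R * mx_l1norm A)) _ _ _)).
- exact: ler01.
- by rewrite mulr_ge0 ?mulr_ge0 ?mx_l1norm_ge0.
- by move=> k; rewrite mul1r normr_expmt_term_le.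
Qed.

Lemma expmt0 : expmt A 0 = 1.
Proof.
apply/matrixP => i j; rewrite expmtE -limn_shiftS.
suff -> : (fun N => series (expmt_term 0 i j) N.+1) = cst ((1 : 'M[R]_n) i j).
  exact: lim_cst.
apply/funext => N; rewrite /series /= big_nat_recl // big1 ?addr0.
  by rewrite /expmt_term !expr0 fact0 divr1 mul1r.
by move=> k _; rewrite /expmt_term expr0n !mul0r.
Qed.

Definition expmt_deriv_term (tau : R) (i j : 'I_n) : R^nat :=
  fun k => tau ^+ k / k`!%:R * (A ^+ k.+1) i j.

Lemma expmt_deriv_termE tau i j : expmt_deriv_term tau i j
  = fun k => \sum_(l <- index_enum 'I_n) (A l j *: expmt_term tau i l) k.
Proof.
apply/funext => k; rewrite /expmt_deriv_term exprSr -mulmxE mxE mulr_sumr.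
apply: eq_bigr => l _.
by rewrite -[RHS]/(A l j * (tau ^+ k / k`!%:R * (A ^+ k) i l)); ring.
Qed.

Lemma is_cvg_expmt_deriv_series tau i j : cvgn (series (expmt_deriv_term tau i j)).
Proof.
rewrite expmt_deriv_termE; apply: is_cvg_series_sum => l.
exact/is_cvg_seriesZ/is_cvg_expmt_series.
Qed.

Lemma expmt_mulmxE tau i j :
  (expmt A tau *m A) i j = limn (series (expmt_deriv_term tau i j)).
Proof.
rewrite expmt_deriv_termE lim_series_sum => [|l]; last first.
  exact/is_cvg_seriesZ/is_cvg_expmt_series.
rewrite mxE; apply: eq_bigr => l _.
rewrite expmtE lim_seriesZ; last exact: is_cvg_expmt_series.
exact: mulrC.
Qed.

Definition expmt_lin_term (tau h : R) (i j : 'I_n) : R^nat :=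
  fun k => k%:R * h * tau ^+ k.-1 / k`!%:R * (A ^+ k) i j.

Lemma expmt_lin_termS tau h i j :
  (fun k => expmt_lin_term tau h i j k.+1) = h *: expmt_deriv_term tau i j.
Proof.
apply/funext => k; rewrite -[RHS]/(h * expmt_deriv_term tau i j k).
rewrite /expmt_lin_term /expmt_deriv_term /= factS natrM.
have kf : k`!%:R != 0 :> R by rewrite pnatr_eq0 -lt0n fact_gt0.
by field; rewrite kf addrC natr1 pnatr_eq0.
Qed.

Lemma expmt_lin_term0 tau h i j : expmt_lin_term tau h i j 0%N = 0.
Proof. by rewrite /expmt_lin_term !mul0r. Qed.

Lemma is_cvg_expmt_lin_series tau h i j : cvgn (series (expmt_lin_term tau h i j)).
Proof.
rewrite -cvgn_shiftS -series_shiftS ?expmt_lin_term0 // expmt_lin_termS.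
exact/is_cvg_seriesZ/is_cvg_expmt_deriv_series.
Qed.

Lemma lim_expmt_lin_series tau h i j :
  limn (series (expmt_lin_term tau h i j)) = h * (expmt A tau *m A) i j.
Proof.
rewrite -limn_shiftS -series_shiftS ?expmt_lin_term0 // expmt_lin_termS.
by rewrite expmt_mulmxE lim_seriesZ //; exact: is_cvg_expmt_deriv_series.
Qed.

Lemma normr_expmt_taylor2_term_le (tau h Y : R) i j k :
  0 <= tau -> 0 <= h -> tau + h <= Y -> 0 < Y ->
  `|(expmt_term (tau + h) i j - expmt_term tau i j - expmt_lin_term tau h i j) k|
    <= h ^+ 2 / Y ^+ 2 * exp_coeff (4 * Y * (n%:R * mx_l1norm A)) k.
Proof.
move=> tau0 h0 tauY Y0; set c := n%:R * mx_l1norm A; set rem := pow_taylor2_rem tau h k.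
have -> : (expmt_term (tau + h) i j - expmt_term tau i j - expmt_lin_term tau h i j) k
    = rem / k`!%:R * (A ^+ k) i j.
  rewrite -[LHS]/(expmt_term (tau + h) i j k - expmt_term tau i j k
                  - expmt_lin_term tau h i j k).
  by rewrite /expmt_term /expmt_lin_term /rem /pow_taylor2_rem; ring.
have rem0 : 0 <= rem by exact: pow_taylor2_rem_ge0.
have remY : rem <= h ^+ 2 / Y ^+ 2 * (4 * Y) ^+ k.
  rewrite mulrAC ler_pdivlMr ?exprn_gt0 // mulrC.
  exact: pow_taylor2_rem_le_exp4.
rewrite normrM ger0_norm ?divr_ge0 // /exp_coeff /= exprMn.
apply: le_trans (_ : rem / k`!%:R * c ^+ k <= _).
  by rewrite ler_wpM2l ?divr_ge0 // normr_powmx_le.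
have -> : h ^+ 2 / Y ^+ 2 * ((4 * Y) ^+ k * c ^+ k / k`!%:R)
    = h ^+ 2 / Y ^+ 2 * (4 * Y) ^+ k / k`!%:R * c ^+ k by ring.
by rewrite ler_wpM2r ?exprn_ge0 ?mulr_ge0 ?mx_l1norm_ge0 // ler_wpM2r ?invr_ge0.
Qed.

Lemma normr_expmt_taylor2_le (tau h Y : R) i j :
  0 <= tau -> 0 <= h -> tau + h <= Y -> 0 < Y ->
  `|(expmt A (tau + h) - expmt A tau - h *: (expmt A tau *m A)) i j|
    <= h ^+ 2 / Y ^+ 2 * expR (4 * Y * (n%:R * mx_l1norm A)).
Proof.
move=> tau0 h0 tauY Y0.
have -> : (expmt A (tau + h) - expmt A tau - h *: (expmt A tau *m A)) i j
    = expmt A (tau + h) i j - expmt A tau i j - h * (expmt A tau *m A) i j.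
  by rewrite !mxE.
have cvg_term s : cvgn (series (expmt_term s i j)) by exact: is_cvg_expmt_series.
rewrite -(lim_expmt_lin_series tau h) !expmtE -lim_seriesB // -lim_seriesB //.
- apply: (proj2 (series_le_exp_coeff _ _ _)); first by rewrite divr_ge0 ?sqr_ge0.
    by rewrite !mulr_ge0 ?mx_l1norm_ge0 // ltW.
  by move=> k; exact: normr_expmt_taylor2_term_le.
- exact: is_cvg_seriesB.
- exact: is_cvg_expmt_lin_series.
Qed.

Lemma mx_l1norm_expmt_taylor2_le (tau h Y : R) :
  0 <= tau -> 0 <= h -> tau + h <= Y -> 0 < Y ->
  mx_l1norm (expmt A (tau + h) - expmt A tau - h *: (expmt A tau *m A))
    <= n%:R ^+ 2 * (expR (4 * Y * (n%:R * mx_l1norm A)) / Y ^+ 2) * h ^+ 2.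
Proof.
move=> tau0 h0 tauY Y0; set e := expR _.
have -> : n%:R ^+ 2 * (e / Y ^+ 2) * h ^+ 2 = n%:R * (n%:R * (h ^+ 2 / Y ^+ 2 * e)).
  by rewrite expr2; ring.
apply: ler_sum_ord_const => i; apply: ler_sum_ord_const => j.
exact: normr_expmt_taylor2_le.
Qed.

End MatrixExponential.

Section BoundedIntegrals.
Variable R : realType.
Local Notation mu := (@lebesgue_measure R).

Lemma lebesgue_measure_itv_bnd_lty (a b : R) (l r : bool) :
  (mu [set` Interval (BSide l a) (BSide r b)] < +oo)%E.
Proof.
by rewrite lebesgue_measure_itv /=; case: ifP => _; rewrite ?ltry // -EFinD ltry.
Qed.

Lemma fine_lebesgue_measure_oc (a b : R) : a <= b -> fine (mu `]a, b]%classic) = b - a.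
Proof.
rewrite le_eqVlt => /predU1P[<-|ab]; last by rewrite lebesgue_measure_itv /= lte_fin ab -EFinD.
by rewrite set_itvoc0 measure0 subrr.
Qed.

Lemma integrable_bounded (D : set R) (g : R -> R) (K : R) :
  measurable D -> (mu D < +oo)%E -> measurable_fun D g ->
  (forall s, D s -> `|g s| <= K) -> mu.-integrable D (EFin \o g).
Proof.
move=> mD Dfin mg gK; apply: measurable_bounded_integrable => //.
exists K; split; first exact: num_real.
by move=> M KM s Ds; apply: le_trans (gK s Ds) (ltW KM).
Qed.

Lemma normr_Rintegral_le (D : set R) (g : R -> R) (K : R) :
  measurable D -> (mu D < +oo)%E -> mu.-integrable D (EFin \o g) ->
  (forall s, D s -> `|g s| <= K) -> `|Rintegral mu D g| <= K * fine (mu D).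
Proof.
move=> mD Dfin ig gK.
have icst c : mu.-integrable D (EFin \o cst c).
  exact: (@integrable_bounded _ _ `|c|).
rewrite ler_norml -mulNr -!Rintegral_cst //; apply/andP; split.
  apply: le_Rintegral; [exact: mD | exact: icst | exact: ig | move=> s Ds].
  by have /ler_normlP[] := gK s Ds; rewrite lerNl.
apply: le_Rintegral; [exact: mD | exact: ig | exact: icst | move=> s Ds].
by have /ler_normlP[] := gK s Ds.
Qed.

Lemma integrable_on_ge0 (D : set R) (g : R -> R) (K : R) :
  measurable D -> (mu D < +oo)%E -> D `<=` `[0, +oo[%classic ->
  measurable_fun (`[0, +oo[%classic : set R) g ->
  (forall s, D s -> `|g s| <= K) -> mu.-integrable D (EFin \o g).
Proof.
move=> mD Dfin D0 mg; apply: integrable_bounded => //.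
by apply: measurable_funS mg => //; exact: measurable_itv.
Qed.

Lemma integrable_oc (g : R -> R) (a b K : R) : 0 <= a ->
  measurable_fun (`[0, +oo[%classic : set R) g ->
  (forall s, a < s <= b -> `|g s| <= K) -> mu.-integrable `]a, b]%classic (EFin \o g).
Proof.
move=> a0 mg gK; apply: (@integrable_on_ge0 _ g K).
- exact: measurable_itv.
- exact: lebesgue_measure_itv_bnd_lty.
- by move=> s /=; rewrite !in_itv /= andbT => /andP[/ltW/(le_trans a0)].
- exact: mg.
- by move=> s /=; rewrite in_itv /=; exact: gK.
Qed.

Lemma normr_Rintegral_oc_le (g : R -> R) (a b K : R) : 0 <= a -> a <= b ->
  measurable_fun (`[0, +oo[%classic : set R) g ->
  (forall s, a < s <= b -> `|g s| <= K) ->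
  `|Rintegral mu `]a, b]%classic g| <= K * (b - a).
Proof.
move=> a0 ab mg gK; rewrite -fine_lebesgue_measure_oc //.
apply: normr_Rintegral_le.
- exact: measurable_itv.
- exact: lebesgue_measure_itv_bnd_lty.
- exact: integrable_oc mg gK.
- by move=> s /=; rewrite in_itv /=; exact: gK.
Qed.

End BoundedIntegrals.

Section RealFacts.
Variable R : realType.

Lemma expR_sub1_le (y : R) : expR y - 1 <= y * expR y.
Proof.
have := ler_wpM2l (ltW (expR_gt0 y)) (expR_ge1Dx (- y)).
rewrite expRxMexpNx_1; lra.
Qed.

Lemma le_of_forall_le_add_divn (v L K : R) :
  (forall N : nat, (0 < N)%N -> v <= L + K / N%:R) -> v <= L.
Proof.
move=> vLK; apply/ler_addgt0Pr => e e0.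
pose N := (Num.truncn (`|K| / e)).+1.
have N0 : 0 < N%:R :> R by rewrite ltr0n.
apply: le_trans (vLK N isT) _; rewrite lerD2l.
apply: le_trans (_ : `|K| / N%:R <= _); first by rewrite ler_pM2r ?invr_gt0 ?ler_norm.
rewrite ler_pdivrMr // mulrC -ler_pdivrMr //.
exact/ltW/truncnS_gt.
Qed.

Lemma riemann_sum_expR_le (sigma t : R) (N : nat) : 0 < sigma -> 0 < t -> (0 < N)%N ->
  t / N%:R * \sum_(0 <= k < N) expR (- sigma * (t - k.+1%:R * (t / N%:R)))
    <= expR (sigma * (t / N%:R)) / sigma.
Proof.
move=> s0 t0 N0; set h := t / N%:R; set S := \sum_(0 <= k < N) _.
set q := expR (- sigma * h).
have h0 : 0 < h by rewrite divr_gt0 // ltr0n.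
have Nh : N%:R * h = t by rewrite /h mulrC divfK // pnatr_eq0 -lt0n.
have S0 : 0 <= S by apply: sumr_ge0 => k _; exact/ltW/expR_gt0.
have eq1 : expR (sigma * h) * q = 1 by rewrite /q mulNr expRxMexpNx_1.
have tele : S - q * S = 1 - expR (- sigma * t).
  rewrite /S mulr_sumr -sumrB.
  rewrite (telescope_sumr_eq (fun k => expR (- sigma * (t - k%:R * h)))) //.
    by rewrite Nh subrr mulr0 expR0 mul0r subr0.
  by move=> k _; rewrite /q -expRD; congr (_ - expR _); rewrite -natr1; ring.
have shq : sigma * h * q <= 1 - q.
  have := ler_wpM2r (ltW (expR_gt0 (- sigma * h))) (expR_ge1Dx (sigma * h)).
  by rewrite -/q eq1; lra.
have shqS : sigma * h * q * S <= 1.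
  apply: le_trans (_ : (1 - q) * S <= 1); first exact: ler_wpM2r.
  by have := expR_gt0 (- sigma * t); nra.
rewrite ler_pdivlMr //.
have := ler_wpM2l (ltW (expR_gt0 (sigma * h))) shqS.
have -> : expR (sigma * h) * (sigma * h * q * S) = h * S * sigma * (expR (sigma * h) * q) by ring.
by rewrite eq1 !mulr1.
Qed.

End RealFacts.

Section BoundedInputTrajectory.
Variables (R : realType) (n : nat) (A : 'M[R]_n) (B : 'cV[R]_n).
Variables (x : R -> 'cV[R]_n) (u : R -> R).
Local Notation mu := (@lebesgue_measure R).
Hypothesis x_cont :
  forall i, {within [set t : R | 0 <= t], continuous (fun t => x t i ord0)}.
Hypothesis u_meas : measurable_fun (`[0, +oo[%classic : set R) u.
Hypothesis u_le1 : forall s : R, 0 <= s -> `|u s| <= 1.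
Hypothesis x_integral : forall t : R, 0 <= t -> forall i,
  x t i ord0 = x 0 i ord0 +
    Rintegral mu `[0, t]%classic (fun s => (A *m x s - u s *: B) i ord0).

Let Ax i s := (A *m x s) i ord0.

Lemma measurable_x i : measurable_fun (`[0, +oo[%classic : set R) (fun t => x t i ord0).
Proof.
have := @x_cont i; rewrite (_ : [set t : R | 0 <= t] = `[0, +oo[%classic) => [xc|].
  by apply: subspace_continuous_measurable_fun => //; exact: measurable_itv.
by apply/seteqP; split => t /=; rewrite in_itv /= andbT.
Qed.

Lemma measurable_Ax i : measurable_fun (`[0, +oo[%classic : set R) (Ax i).
Proof.
have -> : Ax i = fun s => \sum_(l <- index_enum 'I_n) A i l * x s l ord0.
  by apply/funext => s; rewrite /Ax mxE.
apply: measurable_sum => l; exact: measurable_funM (measurable_cst _) (measurable_x l).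
Qed.

Lemma rhsE i :
  (fun s => (A *m x s - u s *: B) i ord0) = Ax i \- (fun s => u s * B i ord0).
Proof. by apply/funext => s; rewrite /Ax /= !mxE. Qed.

Lemma measurable_rhs i :
  measurable_fun (`[0, +oo[%classic : set R) (fun s => (A *m x s - u s *: B) i ord0).
Proof.
rewrite rhsE; exact: measurable_funB (measurable_Ax i) (measurable_funM u_meas (measurable_cst _)).
Qed.

Lemma x_bounded (T : R) : exists X, 0 <= X /\ forall s, 0 <= s <= T -> vnorm2 (x s) <= X.
Proof.
have entry_bounded i : exists X, 0 <= X /\ forall s, 0 <= s <= T -> `|x s i ord0| <= X.
  have xiT : {within `[0, T]%classic, continuous (fun t : R => x t i ord0)}.
    by apply: continuous_subspaceW (@x_cont i) => s /=; rewrite in_itv /= => /andP[].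
  have /compact_bounded[M [_ xM]] := continuous_compact xiT (@segment_compact _ 0 T).
  exists (`|M| + 1); split => [|s sT]; first by rewrite addr_ge0.
  apply: xM; first by rewrite (le_lt_trans (ler_norm M)) ?ltrDl.
  by exists s => //=; rewrite in_itv.
have [X xX] := fin_all_exists entry_bounded.
exists (\sum_i X i); split => [|s sT]; first by apply: sumr_ge0 => i _; case: (xX i).
by apply: le_trans (vnorm2_le_sum_normr _) _; apply: ler_sum => i _; case: (xX i) => _; apply.
Qed.

Lemma normr_rhs_le (X : R) s : 0 <= s -> vnorm2 (x s) <= X -> forall i,
  `|(A *m x s - u s *: B) i ord0| <= mx_l1norm A * X + vnorm2 B.
Proof.
move=> s0 xX i; apply: le_trans (normr_entry_le_vnorm2 _ _) _.
apply: le_trans (ler_vnorm2D _ _) _; rewrite vnorm2N vnorm2Z.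
apply: lerD; first by apply: le_trans (ler_vnorm2_mulmx _ _) _; rewrite ler_wpM2l ?mx_l1norm_ge0.
by rewrite -[leRHS]mul1r ler_wpM2r ?vnorm2_ge0 ?u_le1.
Qed.

Lemma x_increment i (a b : R) : 0 <= a -> a <= b ->
  x b i ord0 - x a i ord0
    = Rintegral mu `]a, b]%classic (fun s => (A *m x s - u s *: B) i ord0).
Proof.
move=> a0 ab; have [X [_ xX]] := x_bounded b.
rewrite (x_integral (le_trans a0 ab)) (x_integral a0) opprD addrACA subrr add0r.
rewrite (Rintegral_itvB (a := BLeft 0) (b := BRight b) (x := a)) //.
apply: (integrable_on_ge0 (K := mx_l1norm A * X + vnorm2 B)) (measurable_rhs i) _.
- exact: measurable_itv.
- exact: lebesgue_measure_itv_bnd_lty.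
- by move=> s /=; rewrite !in_itv /= andbT => /andP[].
- move=> s /=; rewrite in_itv /= => /andP[s0 sb].
  by apply: (normr_rhs_le s0); apply: xX; rewrite s0.
Qed.

Lemma normr_Rintegral_u_le (a b : R) : 0 <= a -> a <= b ->
  `|Rintegral mu `]a, b]%classic u| <= b - a.
Proof.
move=> a0 ab; rewrite -[leRHS]mul1r; apply: normr_Rintegral_oc_le => // s /andP[a_s _].
exact/u_le1/ltW/(le_lt_trans a0 a_s).
Qed.

Lemma x_lipschitz (T : R) : exists L, 0 <= L /\ forall a s, 0 <= a -> a <= s -> s <= T ->
  vnorm2 (x s - x a) <= L * (s - a).
Proof.
have [X [X0 xX]] := x_bounded T; exists (n%:R * (mx_l1norm A * X + vnorm2 B)).
split=> [|a s a0 a_s sT]; first by rewrite mulr_ge0 ?addr_ge0 ?mulr_ge0 ?mx_l1norm_ge0 ?vnorm2_ge0.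
apply: le_trans (vnorm2_le_sum_normr _) _.
rewrite -mulrA; apply: ler_sum_ord_const => i; rewrite !mxE x_increment //.
apply: normr_Rintegral_oc_le (measurable_rhs i) _ => // r /andP[ar rs].
have r0 : 0 <= r by exact/ltW/(le_lt_trans a0).
by apply: (normr_rhs_le r0); apply: xX; rewrite r0 (le_trans rs sT).
Qed.

Lemma x_local_error_entry i (a h : R) : 0 <= a -> 0 <= h ->
  (x (a + h) - x a - h *: (A *m x a) + Rintegral mu `]a, a + h]%classic u *: B) i ord0
    = Rintegral mu `]a, a + h]%classic (fun s => Ax i s - Ax i a).
Proof.
move=> a0 h0; have aah : a <= a + h by rewrite lerDl.
have [X [_ xX]] := x_bounded (a + h).
have xXD s : a < s <= a + h -> vnorm2 (x s) <= X.
  by case/andP => /ltW a_s sah; apply: xX; rewrite (le_trans a0 a_s).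
have iAx : mu.-integrable `]a, a + h]%classic (EFin \o Ax i).
  apply: (integrable_oc (K := mx_l1norm A * X) a0 (measurable_Ax i)) => s /xXD sX.
  apply: le_trans (normr_entry_le_vnorm2 _ _) (le_trans (ler_vnorm2_mulmx _ _) _).
  by rewrite ler_wpM2l ?mx_l1norm_ge0.
have uD s : a < s <= a + h -> `|u s| <= 1.
  by case/andP => a_s _; exact/u_le1/ltW/(le_lt_trans a0 a_s).
have iu : mu.-integrable `]a, a + h]%classic (EFin \o u).
  exact: (integrable_oc (K := 1) a0 u_meas).
have icst c : mu.-integrable `]a, a + h]%classic (EFin \o cst c).
  exact: (integrable_oc (K := `|c|) a0 (measurable_cst c)).
have iuB : mu.-integrable `]a, a + h]%classic (EFin \o (fun s => u s * B i ord0)).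
  apply: (integrable_oc (K := `|B i ord0|) a0 (measurable_funM u_meas (measurable_cst _))).
  by move=> s /uD u1; rewrite normrM -[leRHS]mul1r ler_wpM2r.
rewrite RintegralB //; last exact: icst.
rewrite Rintegral_cst; last exact: measurable_itv.
rewrite fine_lebesgue_measure_oc //.
have -> : (x (a + h) - x a - h *: (A *m x a) + Rintegral mu `]a, a + h] u *: B) i ord0
    = x (a + h) i ord0 - x a i ord0 - h * Ax i a + Rintegral mu `]a, a + h] u * B i ord0.
  by rewrite /Ax !mxE.
rewrite x_increment // rhsE RintegralB // RintegralZr //; ring.
Qed.

Lemma x_local_error (T : R) : exists K, 0 <= K /\ forall a h, 0 <= a -> 0 <= h -> a + h <= T ->
  vnorm2 (x (a + h) - x a - h *: (A *m x a) + Rintegral mu `]a, a + h]%classic u *: B)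
    <= K * h ^+ 2.
Proof.
have [L [L0 xL]] := x_lipschitz T.
exists (n%:R * (mx_l1norm A * L)); split=> [|a h a0 h0 ahT].
  by rewrite mulr_ge0 ?mulr_ge0 ?mx_l1norm_ge0.
apply: le_trans (vnorm2_le_sum_normr _) _.
rewrite -mulrA; apply: ler_sum_ord_const => i; rewrite x_local_error_entry //.
have -> : mx_l1norm A * L * h ^+ 2 = mx_l1norm A * L * h * (a + h - a) by ring.
apply: normr_Rintegral_oc_le => //; first by rewrite lerDl.
  exact: measurable_funB (measurable_Ax i) (measurable_cst _).
move=> s /andP[a_s sah].
have -> : Ax i s - Ax i a = (A *m (x s - x a)) i ord0 by rewrite /Ax mulmxBr !mxE.
apply: le_trans (normr_entry_le_vnorm2 _ _) (le_trans (ler_vnorm2_mulmx _ _) _).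
rewrite -mulrA ler_wpM2l ?mx_l1norm_ge0 //.
apply: le_trans (xL a s a0 (ltW a_s) (le_trans sah ahT)) _.
by rewrite ler_wpM2l // lerBlDl.
Qed.

Section ExponentiallyStable.
Variables (M sigma : R).
Hypothesis M0 : 0 <= M.
Hypothesis sigma0 : 0 < sigma.
Hypothesis expmt_le :
  forall t : R, 0 <= t -> opnorm2 (expmt A t) <= M * expR (- sigma * t).

Lemma increment_bound (T : R) : 0 < T -> exists K, forall s h, 0 <= s -> 0 <= h -> s + h <= T ->
  vnorm2 (expmt A (T - (s + h)) *m x (s + h) - expmt A (T - s) *m x s)
    <= M * vnorm2 B * (h * expR (- sigma * (T - (s + h)))) + K * h ^+ 2.
Proof.
move=> T0; have [K1 [K10 locK]] := x_local_error T.
have [X [X0 xX]] := x_bounded T.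
set CE := n%:R ^+ 2 * (expR (4 * T * (n%:R * mx_l1norm A)) / T ^+ 2).
exists (M * K1 + CE * X) => s h s0 h0 shT.
set tau := T - (s + h); have tau0 : 0 <= tau by rewrite subr_ge0.
have -> : T - s = tau + h by rewrite /tau; ring.
set E := expmt A tau; set E' := expmt A (tau + h).
set I := Rintegral mu `]s, s + h]%classic u.
set x_err := x (s + h) - x s - h *: (A *m x s) + I *: B.
set E_err := E' - E - h *: (E *m A).
have -> : E *m x (s + h) - E' *m x s = E *m x_err - E_err *m x s - I *: (E *m B).
  rewrite /x_err /E_err mulmxDr !mulmxBr !mulmxBl -!scalemxAr -!scalemxAl mulmxA.
  by rewrite addrAC addrK opprB addrA subrK opprB addrA subrK.
have decay : M * expR (- sigma * tau) <= M.
  rewrite -[leRHS]mulr1 ler_wpM2l // expR_le1 mulNr oppr_le0.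
  exact: mulr_ge0 (ltW sigma0) tau0.
have Ex_err : vnorm2 (E *m x_err) <= M * (K1 * h ^+ 2).
  apply: le_trans (ler_vnorm2_mulmx_opnorm2 _ _) _.
  apply: le_trans (_ : M * vnorm2 x_err <= _); last exact: ler_wpM2l (locK _ _ s0 h0 shT).
  by have := le_trans (expmt_le tau0) decay; move/(ler_wpM2r (vnorm2_ge0 x_err)).
have E_err_x : vnorm2 (E_err *m x s) <= CE * h ^+ 2 * X.
  apply: le_trans (ler_vnorm2_mulmx _ _) _.
  apply: ler_pM; rewrite ?mx_l1norm_ge0 ?vnorm2_ge0 //.
    by apply: mx_l1norm_expmt_taylor2_le => //; rewrite /tau; lra.
  by apply: xX; rewrite s0; lra.
have IEB : vnorm2 (I *: (E *m B)) <= M * vnorm2 B * (h * expR (- sigma * tau)).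
  rewrite vnorm2Z.
  have -> : M * vnorm2 B * (h * expR (- sigma * tau))
      = h * (M * expR (- sigma * tau) * vnorm2 B) by ring.
  apply: ler_pM; rewrite ?vnorm2_ge0 //.
    by have := normr_Rintegral_u_le s0 (_ : s <= s + h); rewrite addrAC subrr add0r; apply; lra.
  exact: le_trans (ler_vnorm2_mulmx_opnorm2 _ _) (ler_wpM2r (vnorm2_ge0 _) (expmt_le tau0)).
apply: le_trans (ler_vnorm2D _ _) _; rewrite vnorm2N.
apply: le_trans (lerD (ler_vnorm2D _ _) (lexx _)) _; rewrite vnorm2N.
lra.
Qed.

Lemma discretized_bound (T : R) : 0 < T -> exists K, forall N, (0 < N)%N ->
  vnorm2 (x T) <= M * expR (- sigma * T) * vnorm2 (x 0)
    + M * vnorm2 B * expR (sigma * (T / N%:R)) / sigma + K / N%:R.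
Proof.
move=> T0; have [K incrK] := increment_bound T0; exists (K * T ^+ 2) => N N0.
set h := T / N%:R.
have h0 : 0 < h by rewrite divr_gt0 // ltr0n.
have Nh : N%:R * h = T by rewrite /h mulrC divfK // pnatr_eq0 -lt0n.
pose phi k := expmt A (T - k%:R * h) *m x (k%:R * h).
have -> : x T = phi 0%N + \sum_(0 <= k < N) (phi k.+1 - phi k).
  by rewrite telescope_sumr // addrC subrK /phi Nh subrr expmt0 mul1mx.
apply: le_trans (ler_vnorm2D _ _) _; rewrite -addrA; apply: lerD.
  rewrite /phi mul0r subr0; apply: le_trans (ler_vnorm2_mulmx_opnorm2 _ _) _.
  by have := expmt_le (ltW T0); move/(ler_wpM2r (vnorm2_ge0 (x 0))).
apply: le_trans (ler_vnorm2_sum _ _) _.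
apply: le_trans (_ : \sum_(0 <= k < N)
    (M * vnorm2 B * (h * expR (- sigma * (T - k.+1%:R * h)))  + K * h ^+ 2) <= _).
  rewrite big_nat [leRHS]big_nat; apply: ler_sum => k /andP[_ kN].
  have kh : k.+1%:R * h = k%:R * h + h by rewrite -natr1; ring.
  rewrite /phi kh; apply: incrK; [by rewrite mulr_ge0 // ltW | exact: ltW |].
  by rewrite -kh -Nh ler_pM2r // ler_nat.
rewrite big_split /= -mulr_sumr -mulr_sumr sumr_const_nat subn0.
apply: lerD.
  rewrite -[leRHS]mulrA ler_wpM2l ?mulr_ge0 ?vnorm2_ge0 //.
  exact: riemann_sum_expR_le.
have -> : K * h ^+ 2 *+ N = K * T ^+ 2 / N%:R.
  by rewrite -mulr_natr -Nh; field; rewrite pnatr_eq0 -lt0n.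
exact: lexx.
Qed.

Lemma trajectory_bound (T : R) : 0 < T ->
  vnorm2 (x T) <= M * expR (- sigma * T) * vnorm2 (x 0) + M * vnorm2 B / sigma.
Proof.
move=> T0; have [K discK] := discretized_bound T0.
set C := M * vnorm2 B * expR (sigma * T).
apply: (le_of_forall_le_add_divn (K := C * T + K)) => N N0.
apply: le_trans (discK N N0) _; set h := T / N%:R.
have T0' := ltW T0.
have h0 : 0 <= h by rewrite /h divr_ge0.
have hT : h <= T by rewrite /h ler_pdivrMr ?ltr0n // ler_peMr // ler1n.
have step : expR (sigma * h) <= 1 + sigma * h * expR (sigma * T).
  have shT : expR (sigma * h) <= expR (sigma * T) by rewrite ler_expR ler_pM2l.
  have := expR_sub1_le (sigma * h).
  have : 0 <= sigma * h by rewrite mulr_ge0 // ltW.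
  nra.
have MB0 : 0 <= M * vnorm2 B by rewrite mulr_ge0 ?vnorm2_ge0.
have : M * vnorm2 B * expR (sigma * h) / sigma <= M * vnorm2 B / sigma + C * h.
  have -> : M * vnorm2 B / sigma + C * h
      = M * vnorm2 B * (1 + sigma * h * expR (sigma * T)) / sigma.
    by rewrite /C; field; rewrite gt_eqF.
  by rewrite ler_wpM2r ?invr_ge0 ?(ltW sigma0) // ler_wpM2l.
have -> : (C * T + K) / N%:R = C * h + K / N%:R by rewrite /h; field; rewrite pnatr_eq0 -lt0n.
lra.
Qed.

End ExponentiallyStable.
End BoundedInputTrajectory.

Lemma sign_set_normr_le1 (R : realType) (e v : R) : sign_set e v -> `|v| <= 1.
Proof.
rewrite /sign_set; case: ifP => _; first by move=> ->; rewrite normr1.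
case: ifP => _; first by move=> ->; rewrite normrN normr1.
by rewrite /= in_itv /= => /andP[vN v1]; rewrite ler_norml vN v1.
Qed.

Lemma expR_decay_le_half (R : realType) (M sigma t : R) : 1 <= M -> 0 < sigma ->
  ln (2 * M) / sigma < t -> M * expR (- sigma * t) <= 2^-1.
Proof.
move=> M1 sigma0 t_gt.
have : expR (- sigma * t) <= expR (- ln (2 * M)).
  by rewrite ler_expR mulNr lerN2 -ler_pdivrMl // mulrC ltW.
rewrite expRN lnK ?posrE; last lra.
move/(ler_wpM2l (le_trans ler01 M1)).
by rewrite invfM mulrCA divff ?mulr1 //; lra.
Qed.

Theorem mainTheorem8 (R : realType) (n : nat) (a b : 'I_n -> R)
    (Minit sigma : R) (x : R -> 'cV[R]_n) :
  (0 < n)%N ->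
  hurwitz (obsA a) ->
  0 < Minit -> 0 < sigma ->
  (forall t : R, 0 <= t -> opnorm2 (expmt (obsA a) t) <= Minit * expR (- sigma * t)) ->
  filippov_solution (obsA a) (obsB b) (obsC R n) x ->
  non_sliding (obsC R n) x ->
  vnorm2 (x 0) <= 2 * Minit * vnorm2 (obsB b) / sigma ->
  forall t : R, ln (2 * Minit) / sigma < t ->
    vnorm2 (x t) <= 2 * Minit * vnorm2 (obsB b) / sigma.
Proof.
move=> n0 _ M0 sigma0 expmt_le [x_cont [u [u_meas [u_sign x_int]]]] _ x0_le t t_gt.
have u_le1 s : 0 <= s -> `|u s| <= 1 by move=> s0; exact: sign_set_normr_le1 (u_sign s s0).
have M1 : 1 <= Minit.
  have := expmt_le 0 (lexx 0); rewrite expmt0 mulr0 expR0 mulr1.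
  exact: le_trans (opnorm2_1_ge1 _ n0).
have t0 : 0 < t by apply: le_lt_trans t_gt; rewrite divr_ge0 ?ln_ge0 ?(ltW sigma0) //; lra.
have half := expR_decay_le_half M1 sigma0 t_gt.
have := trajectory_bound x_cont u_meas u_le1 x_int (ltW M0) sigma0 expmt_le t0.
set L := 2 * Minit * vnorm2 (obsB b) / sigma.
have -> : Minit * vnorm2 (obsB b) / sigma = L / 2 by rewrite /L; field; rewrite gt_eqF.
have : Minit * expR (- sigma * t) * vnorm2 (x 0) <= 2^-1 * L.
  apply: ler_pM => //; last exact: vnorm2_ge0.
  exact: mulr_ge0 (ltW M0) (ltW (expR_gt0 _)).
lra.
Qed.
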